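(* Let $G$ be a primitive permutation group on a finite set $\Omega$ of size $n>2$. Then (a) $G$ synchronizes every map $f:\Omega\to\Omega$ of rank $2$; (b) $G$ synchronizes every non-uniform map $f:\Omega\to\Omega$ of rank $3$ or $4$.
   Context: The rank of $f$ is $|\Omega f|$. $G$ synchronizes a non-invertible map $f$ if the semigroup $\langle G,f\rangle$ generated by $G$ and $f$ contains a constant map. The kernel of $f$ is the partition of $\Omega$ into the inverse images of points of the image of $f$; $f$ is uniform if all parts of its kernel have the same size, and non-uniform otherwise. *)

From mathcomp Require Import all_boot all_fingroup all_solvable.
Set Implicit Arguments. Unset Strict Implicit. Unset Printing Implicit Defensive.

Section Synch.
Variable T : finType.

Inductive in_semigroup (G : {set {perm T}}) (f : T -> T) : (T -> T) -> Prop :=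
  | sg_perm (g : {perm T}) : g \in G -> in_semigroup G f (fun x => g x)
  | sg_map : in_semigroup G f f
  | sg_comp h1 h2 : in_semigroup G f h1 -> in_semigroup G f h2 ->
                    in_semigroup G f (h1 \o h2).

Definition synchronizes (G : {set {perm T}}) (f : T -> T) : Prop :=
  exists h, in_semigroup G f h /\ exists c : T, forall x, h x = c.

Definition map_rank (f : T -> T) : nat := #|[set f x | x in T]|.

Definition uniform (f : T -> T) : Prop :=
  forall y1 y2, y1 \in [set f x | x in T] -> y2 \in [set f x | x in T] ->
    #|f @^-1: [set y1]| = #|f @^-1: [set y2]|.

End Synch.

From mathcomp Require Import all_boot all_fingroup all_solvable.
From mathcomp Require Import boolp zify.
Set Implicit Arguments. Unset Strict Implicit. Unset Printing Implicit Defensive.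

(* Let e have minimal rank r in <G, f>. Every element of <G, f> is injective
   on the image of e, so for each g in G that image is a transversal of the
   kernel of e \o g; averaging over the transitive group G shows that all
   kernel classes of e have size n / r.
   If r = 2, call x, y separated when no e \o g (g in G) merges them. A point
   separated from two distinct points would let primitivity make e constant,
   so "equal or separated" is a G-invariant equivalence; it is not equality
   (two image points of e are separated) and not universal (a point outside
   the image of e would be separated from both image points).
   If r = 3 and f has rank 4, every e \o g \o f has rank 3, so its kernel
   classes, which are unions of fibres of f, all have weight n / 3. Exactly two
   fibres of f have another weight, and they must be merged by every e \o g,
   which primitivity again forbids. Hence r = 1, except when r = rank f, in
   which case f itself is uniform. *)

Section PrimitiveInvariantRelations.

Variables (T : finType) (G : {group {perm T}}).
Hypothesis primG : [primitive G, on [set: T] | 'P].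

Lemma prim_invariant_equiv (R : rel T) :
  reflexive R -> symmetric R -> transitive R ->
  (forall g x y, g \in G -> R x y -> R (g x) (g y)) ->
  (forall x y, R x y -> x = y) \/ (forall x y, R x y).
Proof.
move=> Rxx Rsym Rtr RG.
have trG : [transitive G, on [set: T] | 'P] by case/andP: primG.
have [x0 _ _] := imsetP trG.
have x0T : x0 \in [set: T] by rewrite inE.
have toG y : exists2 g, g \in G & y = g x0.
  by have [g Gg ->] := atransP2 trG x0T (in_setT y); exists g.
have RHgroup : group_set [set g in G | R x0 (g x0)].
  apply/group_setP; split=> [|g h]; first by rewrite inE group1 perm1 Rxx.
  rewrite !inE => /andP[Gg Rg] /andP[Gh Rh].
  by rewrite groupM // permM (Rtr (h x0)) // RG.
pose H := Group RHgroup.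
have sCH : 'C_G[x0 | 'P]%g \subset H.
  apply/subsetP=> g /setIP[Gg /astab1P]; rewrite /= apermE => gx0.
  by rewrite inE Gg gx0 Rxx.
have sHG : H \subset G by apply/subsetP=> g; rewrite inE => /andP[].
move: primG; rewrite (trans_prim_astab x0T trG) => /maximal_eqP[_ maxC].
have [HC | HG] := maxC H sCH sHG; [left | right].
- have R_x0 y : R x0 y -> y = x0.
    have [g Gg ->] := toG y => Rx0y.
    by move/setP/(_ g): HC; rewrite !inE Gg Rx0y sub1set inE => /esym/eqP.
  move=> x y; have [g Gg ->] := toG x; have [h Gh ->] := toG y => Rxy.
  have : R x0 ((g^-1)%g (h x0)).
    by have := RG _ _ _ (groupVr Gg) Rxy; rewrite -permM mulgV perm1.
  by move/R_x0/(congr1 g); rewrite -permM mulVg perm1.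
- have R_x0 y : R x0 y.
    have [g Gg ->] := toG y.
    by move/setP/(_ g): HG; rewrite inE Gg => /andP[].
  by move=> x y; apply: (Rtr x0); rewrite // Rsym.
Qed.

Lemma prim_collapse_const (rT : eqType) (e : T -> rT) p q :
  p != q -> (forall g, g \in G -> e (g p) = e (g q)) -> forall u v, e u = e v.
Proof.
move=> npq epq u v.
pose R x y := [forall g in G, e (g x) == e (g y)].
have RP x y : reflect (forall g, g \in G -> e (g x) = e (g y)) (R x y).
  by apply: (iffP forall_inP) => RG g /RG/eqP.
have [R_eq | R_all] : (forall x y, R x y -> x = y) \/ (forall x y, R x y).
  apply: prim_invariant_equiv.
  - by move=> x; apply/RP.
  - by move=> x y; apply/RP/RP=> RG g /RG.
  - by move=> y x z /RP Rxy /RP Ryz; apply/RP=> g Gg; rewrite Rxy ?Ryz.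
  - move=> h x y Gh /RP Rxy; apply/RP=> g Gg; rewrite -!permM.
    by apply: Rxy; rewrite groupM.
- by have := R_eq p q (introT (RP p q) epq); move/eqP: npq.
- by have /RP/(_ 1%g (group1 G)) := R_all u v; rewrite !perm1.
Qed.

End PrimitiveInvariantRelations.

Section TransitiveCounting.

Variables (T : finType) (G : {group {perm T}}).
Hypothesis trG : [transitive G, on [set: T] | 'P].

Lemma card_transporter x y : #|[set g in G | g x == y]| * #|T| = #|G|.
Proof.
have [g0 Gg0 ->] := atransP2 trG (in_setT x) (in_setT y).
have -> : [set g in G | g x == g0 x] = ('C_G[x | 'P] :* g0)%g.
  apply/setP=> g; rewrite mem_rcoset !inE groupMr ?groupV //.
  by rewrite sub1set inE /= apermE permM (canF_eq (permKV g0)).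
rewrite card_rcoset -(card_orbit_stab 'P G x) (atransP trG x (in_setT x)).
by rewrite cardsT mulnC.
Qed.

Lemma sum_card_transl_meet (A B : {set T}) :
  (\sum_(g in G) #|[set x in A | g x \in B]|) * #|T| = #|A| * #|B| * #|G|.
Proof.
under eq_bigr => g _ do rewrite -sum1dep_card.
rewrite (exchange_big_dep (mem A)) /=; last by move=> g x _ /andP[].
rewrite big_distrl -mulnA -[RHS]sum_nat_const; apply: eq_bigr => x Ax.
rewrite (partition_big (fun g : {perm T} => g x) (mem B)) /=; last first.
  by move=> g /andP[_ /andP[]].
rewrite big_distrl -[RHS]sum_nat_const; apply: eq_bigr => y By.
rewrite -(card_transporter x y) -sum1dep_card; congr (_ * _).
apply: eq_bigl => g; rewrite Ax /=.
by case: eqP => [-> | _]; rewrite ?andbF ?By ?andbT.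
Qed.

End TransitiveCounting.

Lemma card_preimset_sum (aT rT : finType) (f : aT -> rT) (P : pred rT) :
  #|[set x | P (f x)]| = \sum_(y in [set f x | x in aT] | P y) #|f @^-1: [set y]|.
Proof.
rewrite -sum1dep_card (partition_big f (fun y => (y \in [set f x | x in aT]) && P y)).
  apply: eq_bigr => y /andP[_ Py]; rewrite -sum1dep_card; apply: eq_bigl => x.
  by rewrite !inE; case: eqP => [-> | _]; rewrite ?Py ?andbF.
by move=> x Px; rewrite Px andbT imset_f.
Qed.

Lemma map_rank_comp (T : finType) (h k : T -> T) : map_rank (h \o k) <= map_rank h.
Proof.
by apply/subset_leq_card/subsetP=> _ /imsetP[x _ ->]; apply: imset_f.
Qed.

Lemma card_image_paired (aT rT : finType) (A : {set aT}) (k : aT -> rT) :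
  (forall x, x \in A -> exists y, [/\ y \in A, y != x & k y = k x]) ->
  2 * #|k @: A| <= #|A|.
Proof.
move=> paired; rewrite -[X in _ <= X]sum1_card (partition_big_imset k) /=.
rewrite mulnC -sum_nat_const.
apply: leq_sum => _ /imsetP[x Ax ->]; have [y [Ay yx kyx]] := paired x Ax.
by rewrite sum1dep_card (cardsD1 x) (cardsD1 y) !inE Ax Ay yx kyx eqxx.
Qed.

Lemma map_rank_gt0 (T : finType) (h : T -> T) : 0 < #|T| -> 0 < map_rank h.
Proof. by case/card_gt0P=> x _; apply/card_gt0P; exists (h x); apply: imset_f. Qed.

Lemma map_rank_const_le1 (T : finType) (h : T -> T) :
  (forall u v, h u = h v) -> map_rank h <= 1.
Proof.
by move=> h_const; apply/card_le1_eqP=> _ _ /imsetP[x _ ->] /imsetP[y _ ->].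
Qed.

Section MinimalRank.

Variables (T : finType) (G : {group {perm T}}) (f : T -> T).

Definition min_rank_elt (e : T -> T) :=
  in_semigroup G f e /\ forall h, in_semigroup G f h -> map_rank e <= map_rank h.

Lemma min_rank_exists : exists e, min_rank_elt e.
Proof.
pose P n := `[< exists2 h, in_semigroup G f h & map_rank h = n >].
have exP : exists n, P n.
  by exists (map_rank f); apply/asboolP; exists f => //; exact: sg_map.
case: (ex_minnP exP) => m /asboolP[e Me em] min_e.
by exists e; split=> // h Mh; rewrite em; apply/min_e/asboolP; exists h.
Qed.

Lemma min_rank_eq e h : min_rank_elt e -> in_semigroup G f h ->
  map_rank h = map_rank e -> min_rank_elt h.
Proof. by move=> [_ min_e] Mh rank_he; split=> // k /min_e; rewrite rank_he. Qed.

Lemma min_rank_inj e k : min_rank_elt e -> in_semigroup G f k ->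
  {in [set e x | x in T] &, injective k}.
Proof.
move=> [Me min_e] Mk; apply/imset_injP; rewrite eqn_leq leq_imset_card /=.
apply: leq_trans (min_e _ (sg_comp Mk Me)) _.
by rewrite /map_rank (imset_comp k e).
Qed.

Lemma min_rank1_sync e : min_rank_elt e -> map_rank e = 1 -> synchronizes G f.
Proof.
move=> [Me _] /eqP/cards1P[c Se]; exists e; split=> //; exists c => x.
by apply/set1P; rewrite -Se imset_f.
Qed.

Lemma min_rank_transversal e g s : min_rank_elt e -> g \in G ->
  s \in [set e x | x in T] ->
  #|[set x in [set e x | x in T] | g x \in e @^-1: [set s]]| = 1.
Proof.
move=> emin Gg Ss; set S := [set e x | x in T].
have Meg : in_semigroup G f (e \o (fun x => g x)) := sg_comp emin.1 (sg_perm f Gg).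
have inj_eg := min_rank_inj emin Meg.
have eg_onto : [set (e \o (fun x => g x)) x | x in S] = S.
  apply/eqP; rewrite eqEcard card_in_imset // leqnn andbT.
  by apply/subsetP=> _ /imsetP[x _ ->]; apply: imset_f.
have /imsetP[x0 Sx0 s_x0] : s \in [set (e \o (fun x => g x)) x | x in S].
  by rewrite eg_onto.
apply: (@eq_card1 _ x0) => x; rewrite !inE; apply/andP/eqP=> [[Sx /eqP egx] | ->].
  by apply: inj_eg; rewrite //= egx.
by rewrite Sx0 s_x0 /=.
Qed.

Hypothesis trG : [transitive G, on [set: T] | 'P].

Lemma min_rank_fibre e s : min_rank_elt e -> s \in [set e x | x in T] ->
  #|e @^-1: [set s]| * map_rank e = #|T|.
Proof.
move=> emin Ss; have := sum_card_transl_meet trG [set e x | x in T] (e @^-1: [set s]).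
rewrite (eq_bigr (fun _ => 1)) => [|g Gg]; last exact: min_rank_transversal.
rewrite sum1_card mulnC -/(map_rank e) [map_rank e * _]mulnC => /eqP.
by rewrite eqn_pmul2r ?cardG_gt0 // => /eqP.
Qed.

Lemma min_rank_uniform e : min_rank_elt e -> uniform e.
Proof.
move=> emin y1 y2 Sy1 Sy2; have rank_gt0 : 0 < map_rank e.
  by apply/card_gt0P; exists y1.
by apply/eqP; rewrite -(eqn_pmul2r rank_gt0) !min_rank_fibre.
Qed.

End MinimalRank.

Section MinimalRankTwo.

Variables (T : finType) (G : {group {perm T}}) (f e : T -> T).
Hypotheses (primG : [primitive G, on [set: T] | 'P]) (emin : min_rank_elt G f e).
Hypothesis rank_e : map_rank e = 2.

Let separated x y := [forall g in G, e (g x) != e (g y)].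

Let separatedP x y :
  reflect (forall g, g \in G -> e (g x) != e (g y)) (separated x y).
Proof. exact: forall_inP. Qed.

Lemma separated_image x y : x \in [set e z | z in T] -> y \in [set e z | z in T] ->
  x != y -> separated x y.
Proof.
move=> Sx Sy xy; apply/separatedP=> g Gg; apply: contra xy => /eqP egxy.
have Meg : in_semigroup G f (e \o (fun z => g z)) := sg_comp emin.1 (sg_perm f Gg).
exact/eqP/(min_rank_inj emin Meg).
Qed.

Lemma separated_perm g x y : g \in G -> separated x y -> separated (g x) (g y).
Proof.
by move=> Gg /separatedP sxy; apply/separatedP=> h Gh; rewrite -!permM sxy ?groupM.
Qed.

Lemma separated_sym : symmetric separated.
Proof. by move=> x y; apply/separatedP/separatedP=> sxy g /sxy; rewrite eq_sym. Qed.

Lemma separated_unique z x y : separated z x -> separated z y -> x = y.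
Proof.
move=> /separatedP zx /separatedP zy; apply/eqP/negP=> /negP xy.
suff /map_rank_const_le1 : forall u v, e u = e v by rewrite rank_e.
apply: (prim_collapse_const primG xy) => g Gg.
have [a [b [_ Se]]] : exists a b, a != b /\ [set e x | x in T] = [set a; b].
  by apply/cards2P; rewrite -/(map_rank e) rank_e.
have ab t : (e t == a) || (e t == b).
  by rewrite -in_set2 -Se imset_f.
move: (ab (g x)) (ab (g y)) (ab (g z)) (zx g Gg) (zy g Gg).
by case/orP=> /eqP-> /orP[]/eqP-> /orP[]/eqP->; rewrite ?eqxx.
Qed.

Lemma min_rank2_false : 2 < #|T| -> False.
Proof.
move=> nT; have [a [b [ab Se]]] : exists a b, a != b /\ [set e x | x in T] = [set a; b].
  by apply/cards2P; rewrite -/(map_rank e) rank_e.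
have [Sa Sb] : a \in [set e x | x in T] /\ b \in [set e x | x in T].
  by rewrite Se !inE !eqxx orbT.
pose Q x y := (x == y) || separated x y.
have [Q_eq | Q_all] : (forall x y, Q x y -> x = y) \/ (forall x y, Q x y).
  apply: (prim_invariant_equiv primG) => [x | x y | y x z | g x y Gg].
  - by rewrite /Q eqxx.
  - by rewrite /Q eq_sym separated_sym.
  - case/orP=> [/eqP-> // | sxy] /orP[/eqP<- | syz]; first by rewrite /Q sxy orbT.
    have syx : separated y x by rewrite separated_sym.
    by rewrite /Q (separated_unique syx syz) eqxx.
  - by case/orP=> [/eqP-> | /(separated_perm Gg) sgxy]; rewrite /Q ?eqxx ?sgxy ?orbT.
- have Qab : Q a b by rewrite /Q separated_image ?orbT.
  by rewrite (Q_eq _ _ Qab) eqxx in ab.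
have /subsetPn[c _ Sc] : ~~ ([set: T] \subset [set e x | x in T]).
  by apply: contraTN nT => /subset_leq_card; rewrite cardsT -/(map_rank e) rank_e -leqNgt.
have /orP[/eqP ac | sac] := Q_all a c; first by rewrite -ac Sa in Sc.
have sab := separated_image Sa Sb ab.
by rewrite -(separated_unique sab sac) Sb in Sc.
Qed.

End MinimalRankTwo.

Section MinimalRankThree.

Variables (T : finType) (G : {group {perm T}}) (f e : T -> T).
Hypotheses (primG : [primitive G, on [set: T] | 'P]) (emin : min_rank_elt G f e).
Hypotheses (rank_e : map_rank e = 3) (rank_f : map_rank f = 4).

Let trG : [transitive G, on [set: T] | 'P]. Proof. by case/andP: primG. Qed.
Let Y := [set f x | x in T].
Let w y := #|f @^-1: [set y]|.
(* The fibres of f that form a kernel class of some (equivalently, of every)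
   e \o g \o f on their own. *)
Let D := [set y in Y | 3 * w y == #|T|].

Lemma weight_sum : \sum_(y in Y) w y = #|T|.
Proof.
have -> : #|T| = #|[set x | xpredT (f x)]| by rewrite -cardsT; apply: eq_card.
by rewrite (card_preimset_sum f xpredT); apply: eq_bigl => y; rewrite andbT.
Qed.

Lemma weight_gt0 y : y \in Y -> 0 < w y.
Proof. by case/imsetP=> x _ ->; apply/card_gt0P; exists x; rewrite !inE. Qed.

Lemma class_weight g y : g \in G -> y \in Y ->
  3 * \sum_(y' in Y | e (g y') == e (g y)) w y' = #|T|.
Proof.
move=> Gg /imsetP[x _ ->]; pose h := e \o (fun z => g z) \o f.
have Mh : in_semigroup G f h := sg_comp (sg_comp emin.1 (sg_perm f Gg)) (sg_map _ _).
have rank_h : map_rank h = map_rank e.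
  apply/eqP; rewrite eqn_leq (emin.2 _ Mh) andbT.
  exact: leq_trans (map_rank_comp _ f) (map_rank_comp e _).
have hmin := min_rank_eq emin Mh rank_h.
have /(min_rank_fibre trG hmin) : h x \in [set h z | z in T] by apply: imset_f.
rewrite rank_h rank_e mulnC => <-; congr (3 * _).
rewrite -(card_preimset_sum f (fun y' => e (g y') == h x)).
by apply: eq_card => z; rewrite !inE.
Qed.

Lemma heavy_isolated g y y' : g \in G -> y \in D -> y' \in Y -> y' != y ->
  e (g y') != e (g y).
Proof.
move=> Gg /setIdP[Yy /eqP wy] Yy' y'y; apply/eqP=> egy.
have := class_weight Gg Yy.
rewrite (bigD1 y) ?Yy ?eqxx //= (bigD1 y') /= ?Yy' ?egy ?eqxx ?y'y //.
rewrite -wy; have := weight_gt0 Yy'; lia.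
Qed.

Lemma light_partner g y : g \in G -> y \in Y :\: D ->
  exists y', [/\ y' \in Y :\: D, y' != y & e (g y') = e (g y)].
Proof.
move=> Gg /setDP[Yy yD].
have [y' /and3P[Yy' /eqP egy y'y]] :
    exists y', [&& y' \in Y, e (g y') == e (g y) & y' != y].
  apply/existsP; apply: contraR yD; rewrite negb_exists => /forallP alone.
  rewrite inE Yy -(class_weight Gg Yy) (big_pred1 y) ?eqxx // => z.
  case: (eqVneq z y) => [-> | zy]; first by rewrite /= Yy !eqxx.
  by move: (alone z); rewrite /= zy andbT (negbTE zy) => /negbTE.
exists y'; split=> //; rewrite inE Yy' andbT.
apply/negP=> Dy'; have := heavy_isolated Gg Dy' Yy.
by rewrite eq_sym y'y egy eqxx => /(_ isT).
Qed.

Let sDY : D \subset Y. Proof. by apply/subsetP=> y /setIdP[]. Qed.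

Let card_split : #|D| + #|Y :\: D| = 4.
Proof. by have := cardsID D Y; rewrite (setIidPr sDY) => ->; apply: rank_f. Qed.

Lemma card_light_ge2 : 2 <= #|Y :\: D|.
Proof.
have sum_heavy : 3 * \sum_(y in D) w y = #|D| * #|T|.
  rewrite big_distrr -sum_nat_const; apply: eq_bigr => y.
  by case/setIdP=> _ /eqP.
have sum_light : #|Y :\: D| <= \sum_(y in Y :\: D) w y.
  by rewrite -sum1_card; apply: leq_sum => y /setDP[Yy _]; apply: weight_gt0.
have nT : 4 <= #|T| by rewrite -rank_f leq_imset_card.
have := weight_sum; rewrite (big_setID D) /= (setIidPr sDY).
move: nT sum_heavy sum_light card_split.
set n := #|T|; case: #|D| => [|[|[|[|[|k]]]]]; lia.
Qed.

Lemma card_light_le2 : #|Y :\: D| <= 2.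
Proof.
have rank_ef : #|e @: Y| = 3.
  rewrite -imset_comp -/(map_rank (e \o f)); apply/eqP; rewrite eqn_leq.
  by rewrite -{1}rank_e map_rank_comp -rank_e (emin.2 _ (sg_comp emin.1 (sg_map _ _))).
have paired : 2 * #|e @: (Y :\: D)| <= #|Y :\: D|.
  apply: card_image_paired => y /(light_partner (group1 G))[y' [YDy' y'y]].
  by rewrite !perm1 => ey'; exists y'.
have : #|e @: Y| <= #|D| + #|e @: (Y :\: D)|.
  rewrite -{1}(setID Y D) (setIidPr sDY) imsetU.
  by apply: leq_trans (leq_card_setU _ _) _; rewrite leq_add2r leq_imset_card.
by move: paired card_split; rewrite rank_ef; lia.
Qed.

Lemma min_rank3_rank4_false : False.
Proof.
have /cards2P[p [q [pq YD]]] : #|Y :\: D| == 2.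
  by rewrite eqn_leq card_light_le2 card_light_ge2.
suff /map_rank_const_le1 : forall u v, e u = e v by rewrite rank_e.
apply: (prim_collapse_const primG pq) => g Gg.
have /(light_partner Gg)[y' [+ y'p <-]] : p \in Y :\: D by rewrite YD !inE eqxx.
by rewrite YD !inE (negbTE y'p) => /eqP->.
Qed.

End MinimalRankThree.

Theorem theorem4 (T : finType) (G : {group {perm T}}) :
  2 < #|T| ->
  [primitive G, on [set: T] | 'P] ->
  (forall f : T -> T, map_rank f = 2 -> synchronizes G f) /\
  (forall f : T -> T, (map_rank f = 3 \/ map_rank f = 4) -> ~ uniform f ->
     synchronizes G f).
Proof.
move=> nT primG; have trG : [transitive G, on [set: T] | 'P] by case/andP: primG.
have min_rank_cases f e : min_rank_elt G f e ->
    [/\ map_rank e <= map_rank f, 0 < map_rank e & map_rank e != 2].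
  move=> emin; split; first exact: (emin.2 _ (sg_map _ _)).
    by apply: map_rank_gt0; apply: leq_trans nT.
  by apply/eqP=> rank2; apply: min_rank2_false primG emin rank2 nT.
split=> [f rank_f | f rank_f non_uniform]; have [e emin] := min_rank_exists G f.
  have [] := min_rank_cases f e emin; rewrite rank_f.
  by move=> le2 gt0 ne2; apply: (min_rank1_sync emin); lia.
have [le_ef gt0 ne2] := min_rank_cases f e emin.
have ne_ef : map_rank e != map_rank f.
  apply: contra_notN non_uniform => /eqP rank_ef; apply: (min_rank_uniform trG).
  exact: min_rank_eq emin (sg_map _ _) (esym rank_ef).
have [rank_e3 | ne3] := eqVneq (map_rank e) 3.
  by case: (min_rank3_rank4_false primG emin rank_e3); lia.
by apply: (min_rank1_sync emin); lia.
Qed.
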